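(* The Funk–Finsler metric $\mathcal{F}$ on the Klein unit disc $\mathbb{D}_K(1)$ is a Douglas metric which is not a Berwald metric.
   Context: $r=\frac{e^2-1}{e^2+1}$, $\mathbb{D}_K(1)=\{x\in\mathbb{R}^2:|x|<r\}$, and $\mathcal{F}(x,\xi)=\frac{\sqrt{(r^2-|x|^2)|\xi|^2+\langle x,\xi\rangle^2}}{r^2-|x|^2}+\frac{(1-r^2)\langle x,\xi\rangle}{(r^2-|x|^2)(1-|x|^2)}$. A Finsler metric is Berwald if its spray coefficients $G^i(x,\xi)$ are quadratic in $\xi$ at each $x$; it is Douglas if $G^i\xi^j-G^j\xi^i$ is a homogeneous polynomial of degree $3$ in $\xi$ at each $x$. Spray coefficients: $G^i=\frac14g^{i\ell}\{[F^2]_{x^k\xi^\ell}\xi^k-[F^2]_{x^\ell}\}$. *)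

From Stdlib Require Import Reals.
From Coquelicot Require Import Coquelicot.
Open Scope R_scope.

(* Points of R^2 are pairs; coordinate index k is 0 (first) or 1 (second). *)
Definition coord (v : R * R) (k : nat) : R :=
  match k with O => fst v | _ => snd v end.
Definition upd (v : R * R) (k : nat) (t : R) : R * R :=
  match k with O => (t, snd v) | _ => (fst v, t) end.

Definition inner (u v : R * R) : R := fst u * fst v + snd u * snd v.
Definition nrm2 (u : R * R) : R := inner u u.

Definition r : R := (exp 2 - 1) / (exp 2 + 1).

Definition inDK (x : R * R) : Prop := sqrt (nrm2 x) < r.

Definition FF (x xi : R * R) : R :=
  sqrt ((r ^ 2 - nrm2 x) * nrm2 xi + (inner x xi) ^ 2) / (r ^ 2 - nrm2 x)
  + (1 - r ^ 2) * inner x xi / ((r ^ 2 - nrm2 x) * (1 - nrm2 x)).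

Definition dx (k : nat) (f : R * R -> R * R -> R) (x xi : R * R) : R :=
  Derive (fun t => f (upd x k t) xi) (coord x k).
Definition dxi (l : nat) (f : R * R -> R * R -> R) (x xi : R * R) : R :=
  Derive (fun t => f x (upd xi l t)) (coord xi l).

Definition sq (L : R * R -> R * R -> R) : R * R -> R * R -> R :=
  fun x xi => (L x xi) ^ 2.

Definition gt (L : R * R -> R * R -> R) (i j : nat) (x xi : R * R) : R :=
  / 2 * dxi i (dxi j (sq L)) x xi.

Definition gdet L x xi :=
  gt L 0 0 x xi * gt L 1 1 x xi - gt L 0 1 x xi * gt L 1 0 x xi.
Definition ginv (L : R * R -> R * R -> R) (i j : nat) (x xi : R * R) : R :=
  match i, j with
  | O, O => gt L 1 1 x xi / gdet L x xi
  | O, _ => - gt L 0 1 x xi / gdet L x xi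
  | _, O => - gt L 1 0 x xi / gdet L x xi
  | _, _ => gt L 0 0 x xi / gdet L x xi
  end.

Definition sum2 (f : nat -> R) : R := f 0%nat + f 1%nat.

Definition G (L : R * R -> R * R -> R) (i : nat) (x xi : R * R) : R :=
  / 4 * sum2 (fun l => ginv L i l x xi *
      (sum2 (fun k => dx k (dxi l (sq L)) x xi * coord xi k)
       - dx l (sq L) x xi)).

Definition IsBerwald (L : R * R -> R * R -> R) : Prop :=
  forall x, inDK x -> forall i : nat, (i = 0%nat \/ i = 1%nat) ->
    exists c0 c1 c2 c3 c4 c5 : R, forall xi : R * R, xi <> (0, 0) ->
      G L i x xi = c0 + c1 * fst xi + c2 * snd xi
                   + c3 * fst xi ^ 2 + c4 * fst xi * snd xi + c5 * snd xi ^ 2.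

(* Douglas: at each x, G^1 xi^2 - G^2 xi^1 is a homogeneous cubic in xi
   (in dimension 2 this is the only nontrivial pair i,j). *)
Definition IsDouglas (L : R * R -> R * R -> R) : Prop :=
  forall x, inDK x ->
    exists c0 c1 c2 c3 : R, forall xi : R * R, xi <> (0, 0) ->
      G L 0 x xi * snd xi - G L 1 x xi * fst xi
      = c0 * fst xi ^ 3 + c1 * fst xi ^ 2 * snd xi
        + c2 * fst xi * snd xi ^ 2 + c3 * snd xi ^ 3.

From Stdlib Require Import Reals Lra.
From Coquelicot Require Import Coquelicot.
Open Scope R_scope.

(* The Funk metric is projectively flat: it satisfies Hamel's condition
   F_{x^k xi^l} xi^k = F_{x^l}.  Combined with Euler's relations for the
   1-homogeneous F, this turns the bracket in the spray formula into
   4 P g_{lj} xi^j with the projective factor P = F_{x^k} xi^k / (2 F), so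
   G^i = P xi^i and G^1 xi^2 - G^2 xi^1 = 0: F is Douglas.  At the centre of
   the disc P(0, (t, 0)) = (1 - r^2) |t| / (2 r), so G^1(0, (t, 0)) is a
   nonzero multiple of t |t|, which is not a quadratic polynomial in t:
   F is not Berwald. *)

Lemma upd_coord y i : upd y i (coord y i) = y.
Proof. destruct y, i; reflexivity. Qed.

Lemma is_derive_sq (f : R -> R) t df :
  is_derive f t df -> is_derive (fun s => f s ^ 2) t (2 * f t * df).
Proof.
intro Hf. replace (2 * f t * df) with (INR 2 * df * f t ^ Init.Nat.pred 2) by (simpl; ring).
exact (is_derive_pow f 2 t df Hf).
Qed.

Lemma is_derive_twice_mult (f g : R -> R) t df dg :
  is_derive f t df -> is_derive g t dg ->
  is_derive (fun s => 2 * f s * g s) t (2 * df * g t + 2 * f t * dg).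
Proof.
intros Hf Hg.
apply is_derive_ext with (f := fun s => 2 * (f s * g s)); [intro s; simpl; ring|].
replace (2 * df * g t + 2 * f t * dg) with (2 * (df * g t + f t * dg)) by ring.
apply is_derive_scal, (is_derive_mult f g t df dg Hf Hg Rmult_comm).
Qed.

Lemma locally_pos_of_ex_derive (f : R -> R) t0 :
  ex_derive f t0 -> 0 < f t0 -> locally t0 (fun t => 0 < f t).
Proof.
intros Hd Hp. apply (ex_derive_continuous f t0 Hd). exact (open_gt 0 _ Hp).
Qed.

Lemma add_pos_of_sq_lt (u v : R) : 0 <= u -> v ^ 2 < u ^ 2 -> 0 < u + v.
Proof.
intros Hu Hvu. destruct (Rlt_or_le 0 (u + v)) as [|Hle]; [assumption|].
assert (0 <= - (u + v) * (u - v)) by (apply Rmult_le_pos; lra). nra.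
Qed.

Lemma mul_abs_not_quadratic :
  ~ exists c0 c1 c2 : R, forall t, t <> 0 -> t * Rabs t = c0 + c1 * t + c2 * t ^ 2.
Proof.
intros (c0 & c1 & c2 & Hc).
pose proof (Hc 1) as H1. pose proof (Hc (-1)) as H2. pose proof (Hc 2) as H3. pose proof (Hc (-2)) as H4.
rewrite Rabs_pos_eq in H1, H3 by lra. rewrite Rabs_left in H2, H4 by lra.
specialize (H1 ltac:(lra)). specialize (H2 ltac:(lra)). specialize (H3 ltac:(lra)). specialize (H4 ltac:(lra)).
lra.
Qed.

Section ProjectivelyFlatSpray.

Variables (L : R * R -> R * R -> R) (Ly Lx : nat -> R * R -> R * R -> R)
  (Lyy Lyx : nat -> nat -> R * R -> R * R -> R) (D : R * R -> R * R -> Prop).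

Hypothesis L_dxi : forall l x y, D x y ->
  is_derive (fun t => L x (upd y l t)) (coord y l) (Ly l x y).
Hypothesis L_dx : forall k x y, D x y ->
  is_derive (fun t => L (upd x k t) y) (coord x k) (Lx k x y).
Hypothesis Ly_dxi : forall i l x y, D x y ->
  is_derive (fun t => Ly l x (upd y i t)) (coord y i) (Lyy i l x y).
Hypothesis Ly_dx : forall k l x y, D x y ->
  is_derive (fun t => Ly l (upd x k t) y) (coord x k) (Lyx k l x y).
Hypothesis D_near_dxi : forall i x y, D x y ->
  locally (coord y i) (fun t => D x (upd y i t)).
Hypothesis D_near_dx : forall k x y, D x y ->
  locally (coord x k) (fun t => D (upd x k t) y).
Hypothesis L_pos : forall x y, D x y -> 0 < L x y.
Hypothesis euler_L : forall x y, D x y -> sum2 (fun j => Ly j x y * coord y j) = L x y.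
Hypothesis euler_Ly : forall l x y, D x y -> sum2 (fun j => Lyy l j x y * coord y j) = 0.
Hypothesis hamel : forall l x y, D x y -> sum2 (fun k => Lyx k l x y * coord y k) = Lx l x y.

Lemma dxi_sq l x y : D x y -> dxi l (sq L) x y = 2 * L x y * Ly l x y.
Proof.
intro H. apply is_derive_unique. unfold sq.
pose proof (is_derive_sq _ _ _ (L_dxi l x y H)) as Hd. cbv beta in Hd. rewrite upd_coord in Hd. exact Hd.
Qed.

Lemma dx_sq k x y : D x y -> dx k (sq L) x y = 2 * L x y * Lx k x y.
Proof.
intro H. apply is_derive_unique. unfold sq.
pose proof (is_derive_sq _ _ _ (L_dx k x y H)) as Hd. cbv beta in Hd. rewrite upd_coord in Hd. exact Hd.
Qed.

Lemma dxi_dxi_sq i l x y : D x y ->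
  dxi i (dxi l (sq L)) x y = 2 * Ly i x y * Ly l x y + 2 * L x y * Lyy i l x y.
Proof.
intro H. apply is_derive_unique.
apply is_derive_ext_loc with (f := fun t => 2 * L x (upd y i t) * Ly l x (upd y i t)).
- eapply filter_imp; [|exact (D_near_dxi i x y H)].
  intros t Ht. symmetry. exact (dxi_sq l x _ Ht).
- pose proof (is_derive_twice_mult _ _ _ _ _ (L_dxi i x y H) (Ly_dxi i l x y H)) as Hd.
  cbv beta in Hd. rewrite !upd_coord in Hd. exact Hd.
Qed.

Lemma dx_dxi_sq k l x y : D x y ->
  dx k (dxi l (sq L)) x y = 2 * Lx k x y * Ly l x y + 2 * L x y * Lyx k l x y.
Proof.
intro H. apply is_derive_unique.
apply is_derive_ext_loc with (f := fun t => 2 * L (upd x k t) y * Ly l (upd x k t) y).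
- eapply filter_imp; [|exact (D_near_dx k x y H)].
  intros t Ht. symmetry. exact (dxi_sq l _ y Ht).
- pose proof (is_derive_twice_mult _ _ _ _ _ (L_dx k x y H) (Ly_dx k l x y H)) as Hd.
  cbv beta in Hd. rewrite !upd_coord in Hd. exact Hd.
Qed.

Lemma gt_contract_xi l x y : D x y ->
  gt L l 0 x y * coord y 0 + gt L l 1 x y * coord y 1 = L x y * Ly l x y.
Proof.
intro H. unfold gt. rewrite !(dxi_dxi_sq _ _ x y H).
pose proof (euler_L x y H) as E1. pose proof (euler_Ly l x y H) as E2. unfold sum2 in E1, E2.
transitivity (Ly l x y * (Ly 0 x y * coord y 0 + Ly 1 x y * coord y 1)
  + L x y * (Lyy l 0 x y * coord y 0 + Lyy l 1 x y * coord y 1)); [field|].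
rewrite E1, E2. ring.
Qed.

Definition proj_factor (x y : R * R) : R := sum2 (fun k => Lx k x y * coord y k) / (2 * L x y).

Lemma spray_bracket l x y : D x y ->
  sum2 (fun k => dx k (dxi l (sq L)) x y * coord y k) - dx l (sq L) x y
  = 4 * proj_factor x y * (L x y * Ly l x y).
Proof.
intro H. unfold sum2. rewrite !(dx_dxi_sq _ _ x y H), (dx_sq _ x y H).
pose proof (hamel l x y H) as E. pose proof (L_pos x y H). unfold sum2 in E.
unfold proj_factor, sum2.
transitivity (2 * Ly l x y * (Lx 0 x y * coord y 0 + Lx 1 x y * coord y 1)
  + 2 * L x y * ((Lyx 0 l x y * coord y 0 + Lyx 1 l x y * coord y 1) - Lx l x y)); [ring|].
rewrite E. field. lra.
Qed.

(* The factor [gdet / gdet] is 1 when the fundamental tensor is nondegenerate,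
   and 0 (Rocq's [/ 0 = 0]) otherwise. *)
Lemma spray_radial i x y : D x y ->
  G L i x y = proj_factor x y * coord y i * (gdet L x y / gdet L x y).
Proof.
intro H. unfold G. unfold sum2 at 1. cbv beta.
rewrite (spray_bracket 0 x y H), (spray_bracket 1 x y H).
rewrite <- (gt_contract_xi 0 x y H), <- (gt_contract_xi 1 x y H).
unfold ginv. unfold Rdiv. generalize (/ gdet L x y); intro inv_det.
unfold gdet. destruct i as [|i]; simpl; field.
Qed.

End ProjectivelyFlatSpray.

Lemma r_bounds : 0 < r < 1.
Proof.
unfold r. assert (H : 1 < exp 2) by (pose proof (exp_ineq1 2); lra).
split; [apply Rdiv_lt_0_compat; lra|].
apply (Rmult_lt_reg_r (exp 2 + 1)); [lra|].
unfold Rdiv. rewrite Rmult_assoc, Rinv_l; lra.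
Qed.

Definition funk_a (x : R * R) : R := r ^ 2 - nrm2 x.
Definition funk_b (x : R * R) : R := 1 - nrm2 x.
Definition funk_Q (x y : R * R) : R := funk_a x * nrm2 y + inner x y ^ 2.
Definition funk_dom (x y : R * R) : Prop := 0 < funk_a x /\ 0 < funk_b x /\ 0 < funk_Q x y.

Definition kron (i l : nat) : R :=
  match i, l with O, O => 1 | S _, S _ => 1 | _, _ => 0 end.
Definition funk_u (l : nat) (x y : R * R) : R :=
  coord y l + inner x y * coord x l / funk_a x.

(* As in [coord], every index [S _] denotes the second coordinate. *)
Definition FF_dxi (l : nat) (x y : R * R) : R :=
  funk_u l x y / sqrt (funk_Q x y) + (1 - r ^ 2) * coord x l / (funk_a x * funk_b x).
Definition FF_dx (k : nat) (x y : R * R) : R :=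
  (inner x y * coord y k - coord x k * nrm2 y) / (sqrt (funk_Q x y) * funk_a x)
  + 2 * coord x k * sqrt (funk_Q x y) / funk_a x ^ 2
  + (1 - r ^ 2) * coord y k / (funk_a x * funk_b x)
  + 2 * (1 - r ^ 2) * inner x y * coord x k * (funk_a x + funk_b x)
    / (funk_a x ^ 2 * funk_b x ^ 2).
Definition FF_dxi_dxi (i l : nat) (x y : R * R) : R :=
  (kron i l + coord x i * coord x l / funk_a x) / sqrt (funk_Q x y)
  - funk_u l x y * funk_u i x y * funk_a x / sqrt (funk_Q x y) ^ 3.
Definition FF_dx_dxi (k l : nat) (x y : R * R) : R :=
  (coord y k * coord x l / funk_a x + inner x y * kron k l / funk_a x
   + 2 * inner x y * coord x l * coord x k / funk_a x ^ 2) / sqrt (funk_Q x y)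
  - funk_u l x y * (inner x y * coord y k - coord x k * nrm2 y) / sqrt (funk_Q x y) ^ 3
  + (1 - r ^ 2) * kron k l / (funk_a x * funk_b x)
  + 2 * (1 - r ^ 2) * coord x l * coord x k * (funk_a x + funk_b x)
    / (funk_a x ^ 2 * funk_b x ^ 2).

Lemma FF_funk x y :
  FF x y = sqrt (funk_Q x y) / funk_a x + (1 - r ^ 2) * inner x y / (funk_a x * funk_b x).
Proof. reflexivity. Qed.

Ltac unfold_funk := unfold funk_dom, FF_dxi, FF_dx, FF_dxi_dxi, FF_dx_dxi, funk_u, kron,
  funk_Q, funk_a, funk_b, FF, nrm2, inner.

Ltac derive_side :=
  repeat split; try lra; try (intro; nra);
  try (apply Rgt_not_eq, sqrt_lt_R0; lra);
  try (apply Rgt_not_eq, Rlt_gt, pow_lt, sqrt_lt_R0; lra).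

Lemma pow_SS_of_sq (s q : R) n : s ^ 2 = q -> s ^ S (S n) = q * s ^ n.
Proof. intro H. rewrite <- H. simpl. ring. Qed.

Ltac field_reducing_sq s q Hsq :=
  field_simplify_eq; [|repeat split; intro; nra];
  repeat rewrite (pow_SS_of_sq s q _ Hsq); ring.

Ltac field_sqrt :=
  unfold Rminus in *; match goal with |- context [sqrt ?q] =>
    assert (0 < sqrt q) by (apply sqrt_lt_R0; first [lra | nra]);
    assert (Hsq : sqrt q ^ 2 = q) by (apply pow2_sqrt; first [lra | nra]);
    set (s := sqrt q) in *; field_reducing_sq s q Hsq end.

Lemma FF_is_derive_dxi l x y : funk_dom x y ->
  is_derive (fun t => FF x (upd y l t)) (coord y l) (FF_dxi l x y).
Proof.
destruct x as [x1 x2], y as [y1 y2]; unfold_funk; intros [Ha [Hb HQ]].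
destruct l as [|l]; simpl in *; auto_derive; try (derive_side; fail); field_sqrt.
Qed.

Lemma FF_is_derive_dx k x y : funk_dom x y ->
  is_derive (fun t => FF (upd x k t) y) (coord x k) (FF_dx k x y).
Proof.
destruct x as [x1 x2], y as [y1 y2]; unfold_funk; intros [Ha [Hb HQ]].
destruct k as [|k]; simpl in *; auto_derive; try (derive_side; fail); field_sqrt.
Qed.

Lemma FF_dxi_is_derive_dxi i l x y : funk_dom x y ->
  is_derive (fun t => FF_dxi l x (upd y i t)) (coord y i) (FF_dxi_dxi i l x y).
Proof.
destruct x as [x1 x2], y as [y1 y2]; unfold_funk; intros [Ha [Hb HQ]].
destruct i as [|i], l as [|l]; simpl in *; auto_derive; try (derive_side; fail);
  field_sqrt.
Qed.

Lemma FF_dxi_is_derive_dx k l x y : funk_dom x y ->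
  is_derive (fun t => FF_dxi l (upd x k t) y) (coord x k) (FF_dx_dxi k l x y).
Proof.
destruct x as [x1 x2], y as [y1 y2]; unfold_funk; intros [Ha [Hb HQ]].
destruct k as [|k], l as [|l]; simpl in *; auto_derive; try (derive_side; fail);
  field_sqrt.
Qed.

Lemma FF_euler x y : funk_dom x y -> sum2 (fun j => FF_dxi j x y * coord y j) = FF x y.
Proof.
destruct x as [x1 x2], y as [y1 y2]; unfold sum2; unfold_funk; intros [Ha [Hb HQ]].
simpl in *. field_sqrt.
Qed.

Lemma FF_dxi_euler l x y : funk_dom x y ->
  sum2 (fun j => FF_dxi_dxi l j x y * coord y j) = 0.
Proof.
destruct x as [x1 x2], y as [y1 y2]; unfold sum2; unfold_funk; intros [Ha [Hb HQ]].
destruct l as [|l]; simpl in *; field_sqrt.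
Qed.

Lemma FF_hamel l x y : funk_dom x y ->
  sum2 (fun k => FF_dx_dxi k l x y * coord y k) = FF_dx l x y.
Proof.
destruct x as [x1 x2], y as [y1 y2]; unfold sum2; unfold_funk; intros [Ha [Hb HQ]].
destruct l as [|l]; simpl in *; field_sqrt.
Qed.

Lemma funk_dom_near_dxi i x y : funk_dom x y ->
  locally (coord y i) (fun t => funk_dom x (upd y i t)).
Proof.
intros [Ha [Hb HQ]].
eapply filter_imp; [intros t Ht; exact (conj Ha (conj Hb Ht))|].
apply locally_pos_of_ex_derive; [|rewrite upd_coord; exact HQ].
destruct x, y, i; unfold funk_Q, funk_a, nrm2, inner; simpl; auto_derive; auto.
Qed.

Lemma funk_dom_near_dx k x y : funk_dom x y ->
  locally (coord x k) (fun t => funk_dom (upd x k t) y).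
Proof.
intros [Ha [Hb HQ]].
apply filter_and; [|apply filter_and];
  (apply locally_pos_of_ex_derive; [|rewrite upd_coord; assumption]);
  destruct x, y, k; unfold funk_Q, funk_a, funk_b, nrm2, inner; simpl; auto_derive; auto.
Qed.

Lemma FF_pos x y : funk_dom x y -> 0 < FF x y.
Proof.
intros [Ha [Hb HQ]]. pose proof r_bounds.
rewrite FF_funk.
assert (Hc : 1 - r ^ 2 = funk_b x - funk_a x) by (unfold funk_a, funk_b; ring).
assert (Hn : 0 <= nrm2 y) by (unfold nrm2, inner; nra).
assert (HS0 : 0 <= sqrt (funk_Q x y)) by apply sqrt_pos.
assert (HS : sqrt (funk_Q x y) ^ 2 = funk_Q x y) by (apply pow2_sqrt; lra).
rewrite Hc. set (w := sqrt (funk_Q x y)) in *. unfold funk_Q in HS, HQ.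
set (a := funk_a x) in *. set (b := funk_b x) in *.
set (s := inner x y) in *. set (n := nrm2 y) in *.
assert (Hba : 0 < b - a) by (unfold a, b, funk_a, funk_b; nra).
(* (w b)^2 - ((b - a) s)^2 = a n b^2 + a (2 b - a) s^2 >= a b (a n + s^2) > 0 *)
assert (Hgap : ((b - a) * s) ^ 2 < (w * b) ^ 2).
{ replace ((w * b) ^ 2) with (w ^ 2 * b ^ 2) by ring. rewrite HS.
  assert (0 < a * b * (a * n + s ^ 2)) by (apply Rmult_lt_0_compat; nra).
  assert (0 <= a * n * b * (b - a)) by (apply Rmult_le_pos; [|lra]; nra).
  assert (0 <= s ^ 2 * a * (b - a)) by (apply Rmult_le_pos; [|lra]; nra).
  assert ((a * n + s ^ 2) * b ^ 2 - ((b - a) * s) ^ 2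
    = a * b * (a * n + s ^ 2) + a * n * b * (b - a) + s ^ 2 * a * (b - a)) by ring.
  lra. }
assert (Hnum : 0 < w * b + (b - a) * s)
  by (apply add_pos_of_sq_lt; [apply Rmult_le_pos|]; lra).
replace (w / a + (b - a) * s / (a * b)) with ((w * b + (b - a) * s) / (a * b)) by (field; lra).
apply Rdiv_lt_0_compat; nra.
Qed.

Lemma inDK_funk_dom x y : inDK x -> y <> (0, 0) -> funk_dom x y.
Proof.
destruct x as [x1 x2], y as [y1 y2]. unfold inDK, funk_dom, funk_Q, funk_a, funk_b, nrm2, inner.
cbn [fst snd]. intros Hx Hy. pose proof r_bounds.
assert (Hx2 : x1 * x1 + x2 * x2 < r ^ 2).
{ rewrite <- (sqrt_sqrt (x1 * x1 + x2 * x2)) by nra.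
  pose proof (sqrt_pos (x1 * x1 + x2 * x2)). nra. }
assert (Hy2 : 0 < y1 * y1 + y2 * y2).
{ destruct (Req_dec y1 0), (Req_dec y2 0); [subst; contradiction Hy; reflexivity|nra..]. }
assert (0 < (r ^ 2 - (x1 * x1 + x2 * x2)) * (y1 * y1 + y2 * y2)) by (apply Rmult_lt_0_compat; lra).
assert (0 <= (x1 * y1 + x2 * y2) ^ 2) by apply pow2_ge_0.
repeat split; nra.
Qed.

Lemma FF_dxi_dxi_sq i l x y : funk_dom x y ->
  dxi i (dxi l (sq FF)) x y = 2 * FF_dxi i x y * FF_dxi l x y + 2 * FF x y * FF_dxi_dxi i l x y.
Proof.
apply dxi_dxi_sq; [exact FF_is_derive_dxi | exact FF_dxi_is_derive_dxi | exact funk_dom_near_dxi].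
Qed.

Lemma FF_spray_radial i x y : funk_dom x y ->
  G FF i x y = proj_factor FF FF_dx x y * coord y i * (gdet FF x y / gdet FF x y).
Proof.
apply spray_radial with (Ly := FF_dxi) (Lyy := FF_dxi_dxi) (Lyx := FF_dx_dxi).
- exact FF_is_derive_dxi.
- exact FF_is_derive_dx.
- exact FF_dxi_is_derive_dxi.
- exact FF_dxi_is_derive_dx.
- exact funk_dom_near_dxi.
- exact funk_dom_near_dx.
- exact FF_pos.
- exact FF_euler.
- exact FF_dxi_euler.
- exact FF_hamel.
Qed.

Lemma inDK_origin : inDK (0, 0).
Proof.
unfold inDK, nrm2, inner; cbn [fst snd]. rewrite Rmult_0_l, Rplus_0_l, sqrt_0.
apply r_bounds.
Qed.

Lemma funk_dom_origin t : t <> 0 -> funk_dom (0, 0) (t, 0).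
Proof.
intro Ht. apply (inDK_funk_dom _ _ inDK_origin). intro E; injection E; lra.
Qed.

Lemma gdet_FF_origin t : t <> 0 -> gdet FF (0, 0) (t, 0) = / r ^ 4.
Proof.
intro Ht. pose proof r_bounds. assert (0 < t * t) by (apply Rsqr_pos_lt; exact Ht).
assert (0 < r ^ 2 * (t * t)) by (apply Rmult_lt_0_compat; nra).
unfold gdet, gt. rewrite !(FF_dxi_dxi_sq _ _ _ _ (funk_dom_origin t Ht)).
unfold_funk. simpl. field_sqrt.
Qed.

Lemma sqrt_funk_Q_origin t : sqrt (funk_Q (0, 0) (t, 0)) = r * Rabs t.
Proof.
pose proof r_bounds. rewrite <- (sqrt_pow2 (r * Rabs t)) by (pose proof (Rabs_pos t); nra).
f_equal. unfold funk_Q, funk_a, nrm2, inner; cbn [fst snd].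
rewrite Rpow_mult_distr, pow2_abs. ring.
Qed.

Lemma proj_factor_FF_origin t : t <> 0 ->
  proj_factor FF FF_dx (0, 0) (t, 0) = (1 - r ^ 2) / (2 * r) * Rabs t.
Proof.
intro Ht. pose proof r_bounds. pose proof (Rabs_pos_lt t Ht).
assert (Hsq : Rabs t ^ 2 = t ^ 2) by apply pow2_abs.
unfold proj_factor, sum2, FF_dx. rewrite FF_funk, sqrt_funk_Q_origin.
unfold funk_a, funk_b, nrm2, inner; cbn [coord fst snd].
field_reducing_sq (Rabs t) (t ^ 2) Hsq.
Qed.

Lemma G_FF_origin t : t <> 0 ->
  G FF 0 (0, 0) (t, 0) = (1 - r ^ 2) / (2 * r) * (t * Rabs t).
Proof.
intro Ht. pose proof r_bounds.
rewrite (FF_spray_radial 0 _ _ (funk_dom_origin t Ht)), gdet_FF_origin, proj_factor_FF_origin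
  by exact Ht.
cbn [coord fst]. field. lra.
Qed.

Theorem corollary4p1 : IsDouglas FF /\ ~ IsBerwald FF.
Proof.
split.
- intros x Hx. exists 0, 0, 0, 0. intros y Hy.
  rewrite !(FF_spray_radial _ x y (inDK_funk_dom x y Hx Hy)).
  destruct y as [y1 y2]; cbn [coord fst snd]. ring.
- intro HB. pose proof r_bounds.
  destruct (HB (0, 0) inDK_origin 0%nat (or_introl eq_refl))
    as (c0 & c1 & c2 & c3 & c4 & c5 & Hc).
  apply mul_abs_not_quadratic.
  set (k := 2 * r / (1 - r ^ 2)).
  exists (k * c0), (k * c1), (k * c3). intros t Ht.
  specialize (Hc (t, 0) ltac:(intro E; injection E; lra)).
  rewrite G_FF_origin in Hc by exact Ht. cbn [fst snd] in Hc.
  replace (t * Rabs t) with (k * ((1 - r ^ 2) / (2 * r) * (t * Rabs t)))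
    by (unfold k; field; split; nra).
  rewrite Hc. ring.
Qed.
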